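(* Let $\mathcal{H}$ be a real Hilbert space, let $A\colon \mathcal{H}\rightrightarrows\mathcal{H}$ be maximally monotone, and let $B\colon\mathcal{H}\to\mathcal{H}$ be monotone with $B=\frac{1}{n}\sum_{i=1}^nB_i$ where each $B_i\colon\mathcal{H}\to\mathcal{H}$ is $L$-Lipschitz. Let $x\in(A+B)^{-1}(0)$ and $\lambda \in \left(0,\frac{1}{2L}\right)$. Given $x_0,x_{-1}\in\mathcal{H}$ and indices $i_k\in\{1,\dots,n\}$ (e.g. chosen uniformly at random), let $$x_{k+1} = J_{\lambda A}\bigl( x_k-\lambda B(x_k) - \lambda( B_{i_k}(x_k) - B_{i_k}(x_{k-1})) \bigr)\quad\forall k\in\mathbb{N}.$$ Then there exists $\varepsilon>0$ such that, for all $k\in\mathbb{N}$ (and every realization of the indices), $$\|x_{k+1}-x\|^2+2\lambda\langle B(x_{k+1})-B(x_k),x-x_{k+1}\rangle + \left(\tfrac{1}{2}+\varepsilon\right)\|x_{k+1}-x_k\|^2 \leq \|x_k-x\|^2 + 2\lambda\langle B_{i_k}(x_k)-B_{i_k}(x_{k-1}), x-x_{k}\rangle +\tfrac{1}{2}\|x_{k}-x_{k-1}\|^2.$$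
   Context: $J_{\lambda A}:=(I+\lambda A)^{-1}$ denotes the resolvent of $\lambda A$. *)

From HB Require Import structures.
From mathcomp Require Import all_boot all_order all_algebra.
From mathcomp Require Import all_classical all_reals.
From mathcomp Require Import topology normedtype.
Set Implicit Arguments. Unset Strict Implicit. Unset Printing Implicit Defensive.
Import Order.TTheory GRing.Theory Num.Theory.
Import numFieldNormedType.Exports.
Local Open Scope ring_scope.

(* A real Hilbert space is modelled as a complete normed space [V] over a
   realType [R] together with a map [ip] that is an inner product inducing
   the norm of [V]. *)
Definition is_inner_product (R : realType) (V : normedModType R)
    (ip : V -> V -> R) : Prop :=
  (forall x y : V, ip x y = ip y x) /\
  (forall (a : R) (x y z : V), ip (a *: x + y) z = a * ip x z + ip y z) /\
  (forall x : V, ip x x = `|x| ^+ 2).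

(* Set-valued operators V ⇉ V are relations: [A x u] means u ∈ A x. *)
Definition monotone_op (R : realType) (V : normedModType R)
    (ip : V -> V -> R) (A : V -> V -> Prop) : Prop :=
  forall x y u v : V, A x u -> A y v -> 0 <= ip (x - y) (u - v).

Definition maximally_monotone (R : realType) (V : normedModType R)
    (ip : V -> V -> R) (A : V -> V -> Prop) : Prop :=
  monotone_op ip A /\
  forall A' : V -> V -> Prop, monotone_op ip A' ->
    (forall x u, A x u -> A' x u) -> forall x u, A' x u -> A x u.

Definition monotone_fun (R : realType) (V : normedModType R)
    (ip : V -> V -> R) (B : V -> V) : Prop :=
  forall x y : V, 0 <= ip (x - y) (B x - B y).

Definition lipschitz_with (R : realType) (V : normedModType R)
    (L : R) (B : V -> V) : Prop :=
  forall x y : V, `|B x - B y| <= L * `|x - y|.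

(* Resolvent J_{lam A} = (I + lam A)^{-1}, as a relation:
   [resolvent lam A z p] means p ∈ (I + lam A)^{-1} z, i.e. z ∈ p + lam A p.
   (For maximally monotone A and lam > 0 it is single-valued.) *)
Definition resolvent (R : realType) (V : normedModType R)
    (lam : R) (A : V -> V -> Prop) (z p : V) : Prop :=
  exists u : V, A p u /\ z = p + lam *: u.

From HB Require Import structures.
From mathcomp Require Import all_boot all_order all_algebra.
From mathcomp Require Import all_classical all_reals.
From mathcomp Require Import topology normedtype.
From mathcomp Require Import ring lra.
Import Order.TTheory GRing.Theory Num.Theory.
Import numFieldNormedType.Exports.
Local Open Scope ring_scope.

(* Testing the resolvent step against p - x, where p = x_{k+1}, and adding the
   monotonicity inequalities of A (at p and at the zero x) and of B gives
   <p - x, (x_k - p) + lam (B p - B x_k) - lam e> >= 0 with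
   e = B_i x_k - B_i x_{k-1}; the three-point identity turns <p - x, x_k - p>
   into squared distances.  What remains is the cross term
   2 lam <e, x_k - p>, which Young's inequality and the Lipschitz bound on e
   bound by lam L (|x_k - x_{k-1}|^2 + |x_k - p|^2); since lam L < 1/2 this
   is absorbed, leaving eps = 1/2 - lam L. *)

Section InnerProduct.
Context {R : realType} {V : normedModType R} {ip : V -> V -> R}.
Hypothesis ip_inner : is_inner_product ip.

Lemma ipC x y : ip x y = ip y x.
Proof. by case: ip_inner. Qed.

Lemma ip_norm x : ip x x = `|x| ^+ 2.
Proof. by case: ip_inner => _ []. Qed.

Lemma ip0l z : ip 0 z = 0.
Proof.
case: ip_inner => _ [ipZD _]; have := ipZD 1 0 0 z.
rewrite scale1r addr0 mul1r; lra.
Qed.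

Lemma ipDl x y z : ip (x + y) z = ip x z + ip y z.
Proof.
by case: ip_inner => _ [ipZD _]; rewrite -[x]scale1r ipZD mul1r scale1r.
Qed.

Lemma ipZl a x z : ip (a *: x) z = a * ip x z.
Proof.
by case: ip_inner => _ [ipZD _]; rewrite -[a *: x]addr0 ipZD ip0l addr0.
Qed.

Lemma ipNl x z : ip (- x) z = - ip x z.
Proof. by rewrite -scaleN1r ipZl mulN1r. Qed.

Lemma ipDr x y z : ip z (x + y) = ip z x + ip z y.
Proof. by rewrite !(ipC z) ipDl. Qed.

Lemma ipZr a x z : ip z (a *: x) = a * ip z x.
Proof. by rewrite !(ipC z) ipZl. Qed.

Lemma ipNr x z : ip z (- x) = - ip z x.
Proof. by rewrite !(ipC z) ipNl. Qed.

Lemma ipBr x y z : ip z (x - y) = ip z x - ip z y.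
Proof. by rewrite ipDr ipNr. Qed.

Lemma sqr_normD x y : `|x + y| ^+ 2 = `|x| ^+ 2 + 2 * ip x y + `|y| ^+ 2.
Proof. by rewrite -!ip_norm ipDl !ipDr (ipC y x); ring. Qed.

Lemma ip_young (t : R) u v :
  0 < t -> 2 * ip u v <= t^-1 * `|u| ^+ 2 + t * `|v| ^+ 2.
Proof.
move=> t_gt0; rewrite -(ler_pM2l t_gt0) mulrDr mulVKf ?gt_eqF //.
have := sqr_ge0 `|u - t *: v|; rewrite sqr_normD ipNr ipZr normrN normrZ.
by rewrite exprMn gtr0_norm //; lra.
Qed.

Lemma ip_lipschitz_le {f : V -> V} {L : R} y z w :
  0 < L -> lipschitz_with L f ->
  2 * ip (f y - f z) w <= L * (`|y - z| ^+ 2 + `|w| ^+ 2).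
Proof.
move=> L_gt0 f_lip; apply: le_trans (ip_young _ _ _ L_gt0) _.
rewrite mulrDr lerD2r ler_pdivrMl // mulrA -expr2 -exprMn.
by rewrite lerXn2r ?nnegrE ?f_lip // (le_trans _ (f_lip y z)).
Qed.

Lemma forward_backward_step {A : V -> V -> Prop} {B : V -> V} {lam : R}
    {x y p e : V} :
  monotone_op ip A -> monotone_fun ip B ->
  A x (- B x) -> 0 < lam ->
  resolvent lam A (y - lam *: B y - lam *: e) p ->
  `|p - x| ^+ 2 + 2 * lam * ip (B p - B y) (x - p) + `|p - y| ^+ 2
    <= `|y - x| ^+ 2 + 2 * lam * ip e (x - p).
Proof.
move=> monoA monoB Ax lam_gt0 [u [Apu step]].
have lam_u : lam *: u = y - lam *: B y - lam *: e - p.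
  by rewrite step addrAC subrr add0r.
have resolvent_ip : lam * ip (p - x) u = ip (p - x) y
    - lam * ip (p - x) (B y) - lam * ip (p - x) e - ip (p - x) p.
  by rewrite -ipZr lam_u !ipBr !ipZr.
have monoA_lam : 0 <= lam * ip (p - x) (u - - B x).
  by rewrite pmulr_rge0 //; exact: monoA.
have monoB_lam : 0 <= lam * ip (p - x) (B p - B x).
  by rewrite pmulr_rge0.
have three_point : `|y - x| ^+ 2
    = `|p - x| ^+ 2 + 2 * (ip (p - x) y - ip (p - x) p) + `|y - p| ^+ 2.
  by rewrite -ipBr -sqr_normD [_ + (y - p)]addrC addrA subrK.
rewrite ipBr ipNr opprK in monoA_lam; rewrite ipBr in monoB_lam.
rewrite -[x - p]opprB !ipNr !(ipC _ (p - x)) ipBr (distrC p y) three_point.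
lra.
Qed.

End InnerProduct.

(* xs k stands for x_{k-1}: xs 0 = x_{-1}, xs 1 = x_0, xs (k.+2) = x_{k+1}. *)
Theorem lemma6p1 (R : realType) (V : completeNormedModType R)
  (ip : V -> V -> R) (Hip : is_inner_product ip)
  (A : V -> V -> Prop) (HA : maximally_monotone ip A)
  (n : nat) (Hn : (0 < n)%N) (Bi : 'I_n -> V -> V) (L : R) (HL : 0 < L)
  (HBi : forall i, lipschitz_with L (Bi i))
  (B : V -> V) (HBdef : forall y, B y = n%:R^-1 *: \sum_(i < n) Bi i y)
  (HBmon : monotone_fun ip B)
  (x : V) (Hx : A x (- B x))
  (lam : R) (Hlam0 : 0 < lam) (Hlam1 : lam < 1 / (2 * L)) :
  exists eps : R, 0 < eps /\
    forall (xs : nat -> V) (idx : nat -> 'I_n),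
      (forall k : nat,
          resolvent lam A
            (xs k.+1 - lam *: B (xs k.+1)
               - lam *: (Bi (idx k) (xs k.+1) - Bi (idx k) (xs k)))
            (xs k.+2)) ->
      forall k : nat,
        `|xs k.+2 - x| ^+ 2
          + 2 * lam * ip (B (xs k.+2) - B (xs k.+1)) (x - xs k.+2)
          + (1 / 2 + eps) * `|xs k.+2 - xs k.+1| ^+ 2
        <= `|xs k.+1 - x| ^+ 2
          + 2 * lam * ip (Bi (idx k) (xs k.+1) - Bi (idx k) (xs k)) (x - xs k.+1)
          + 1 / 2 * `|xs k.+1 - xs k| ^+ 2.
Proof.
have lamL_lt : lam * L < 1 / 2.
  by move: Hlam1; rewrite ltr_pdivlMr ?mulr_gt0 //; lra.
exists (1 / 2 - lam * L); split; first lra.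
move=> xs idx Hres k.
set p := xs k.+2; set y := xs k.+1; set z := xs k.
set e := Bi (idx k) y - Bi (idx k) z.
have step := forward_backward_step Hip HA.1 HBmon Hx Hlam0 (Hres k).
have cross := ip_lipschitz_le Hip y z (y - p) HL (HBi (idx k)).
have cross_lam := ler_wpM2l (ltW Hlam0) cross.
have lamL_yz : lam * L * `|y - z| ^+ 2 <= 1 / 2 * `|y - z| ^+ 2.
  by rewrite ler_wpM2r ?sqr_ge0 ?ltW.
have split_ip : ip e (x - p) = ip e (x - y) + ip e (y - p).
  by rewrite -(ipDr Hip) addrA subrK.
rewrite split_ip (distrC y p) in step cross_lam.
lra.
Qed.
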